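(* Let $A$ be a finite-dimensional evolution algebra over a field $\mathbb{K}$ with natural basis $B$. \begin{enumerate} \item[(i)] If $I$ is an ideal of $A$ with $I=\mathbb{K}u$ and $|\mathrm{supp}_B(u)|>1$, then $A/I$ is not simple. \item[(ii)] If $A=A_1\otimes A_2$ where $A_1,A_2$ are evolution $\mathbb{K}$-algebras with $\dim A_1>1$ and $\dim A_2>1$ (so $A$ is tensorially decomposable), and $0\neq I$ is an ideal of $A$ with $I=\mathbb{K}u$, then $A/I$ is not simple. \end{enumerate}
   Context: An evolution algebra over $\mathbb{K}$ is a $\mathbb{K}$-algebra with a basis $B=\{e_1,\dots,e_n\}$ (natural basis) such that $e_ie_j=0$ for $i\neq j$. For $u=\sum_i\alpha_ie_i\in A$, $\mathrm{supp}_B(u)=\{i:\alpha_i\neq0\}$. The tensor product $A_1\otimes A_2$ of evolution algebras with natural bases $\{a_i\}$, $\{b_p\}$ is the evolution algebra with natural basis $\{a_i\otimes b_p\}$ and product $(a\otimes b)(a'\otimes b')=aa'\otimes bb'$. A $\mathbb{K}$-algebra is simple if its square is nonzero and its only ideals are $0$ and itself. *)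

From HB Require Import structures.
From mathcomp Require Import all_boot all_order all_algebra.
Set Implicit Arguments. Unset Strict Implicit. Unset Printing Implicit Defensive.
Import GRing.Theory.
Local Open Scope ring_scope.

Section EvoDefs.
Variable K : fieldType.

(* A finite-dimensional evolution algebra with natural basis {e_i | i : I}
   is modelled, via coordinates in that basis, by K^I = evo I = {ffun I -> K^o} with
   e_i = indicator of i and product determined by the structure constants
   C : e_i e_i = \sum_k C i k e_k, e_i e_j = 0 (i <> j). *)
Definition evo (I : finType) : lmodType K := {ffun I -> K^o}.

Definition evo_mul (I : finType) (C : I -> I -> K) (x y : evo I)
  : evo I := [ffun k => \sum_i x i * y i * C i k].

Definition evo_basis (I : finType) (i : I) : evo I :=
  [ffun j => (i == j)%:R].

Definition supp (I : finType) (u : evo I) : {set I} :=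
  [set i | u i != 0].

(* tensor product of evolution algebras: natural basis a_i (x) b_p indexed by
   I1 * I2, with (a_i (x) b_p)^2 = a_i^2 (x) b_p^2 *)
Definition tensor_C (I1 I2 : finType) (C1 : I1 -> I1 -> K) (C2 : I2 -> I2 -> K)
  : (I1 * I2)%type -> (I1 * I2)%type -> K :=
  fun ip jq => C1 ip.1 jq.1 * C2 ip.2 jq.2.

Definition bilinear_mul (V : lmodType K) (mul : V -> V -> V) : Prop :=
  forall (a : K) (x y z : V),
    mul (a *: x + y) z = a *: mul x z + mul y z /\
    mul z (a *: x + y) = a *: mul z x + mul z y.

Definition subspace (V : lmodType K) (P : V -> Prop) : Prop :=
  P 0 /\ forall (a : K) (x y : V), P x -> P y -> P (a *: x + y).

Definition alg_ideal (V : lmodType K) (mul : V -> V -> V) (P : V -> Prop) : Prop :=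
  subspace P /\ forall x y : V, P y -> P (mul x y) /\ P (mul y x).

Definition simple_alg (V : lmodType K) (mul : V -> V -> V) : Prop :=
  (exists x y : V, mul x y <> 0) /\
  forall P : V -> Prop, alg_ideal mul P ->
    (forall x, P x <-> x = 0) \/ (forall x, P x).

Definition line (V : lmodType K) (u : V) : V -> Prop :=
  fun x => exists k : K, x = k *: u.

(* (V, mulV) together with f is (a copy of) the quotient algebra A / P:
   f is a surjective algebra homomorphism with kernel exactly P *)
Definition is_quotient_alg (A : lmodType K) (mulA : A -> A -> A) (P : A -> Prop)
  (V : lmodType K) (mulV : V -> V -> V) (f : A -> V) : Prop :=
  bilinear_mul mulV /\ linear f /\
  (forall x y, f (mulA x y) = mulV (f x) (f y)) /\
  (forall v : V, exists x : A, f x = v) /\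
  (forall x : A, f x = 0 <-> P x).

Definition quotient_simple (A : lmodType K) (mulA : A -> A -> A) (P : A -> Prop)
  : Prop :=
  exists (V : lmodType K) (mulV : V -> V -> V) (f : A -> V),
    is_quotient_alg mulA P mulV f /\ simple_alg mulV.

End EvoDefs.

From HB Require Import structures.
From mathcomp Require Import all_boot all_order all_algebra.
Set Implicit Arguments.
Unset Strict Implicit.
Unset Printing Implicit Defensive.

Import GRing.Theory.
Local Open Scope ring_scope.

(* (i) Pick j in supp u.  As K u is an ideal, e_j u = u_j e_j^2 lies in K u, so
   e_j^2 does too, and every product with a multiple of e_j falls into K u.
   Since u has a second support index, e_j is not in K u, and its class spans a
   nonzero ideal of A / K u all of whose products vanish: it is proper, or it
   is the whole quotient, whose square is then zero.
   (ii) If |supp u| <= 1, then u is a multiple of a basis vector a_i (x) b_p and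
   e^2 in K e for e = a_i (x) b_p reads C1 i k * C2 p r = 0 off (i, p).  Hence
   a_i^2 in K a_i or b_p^2 in K b_p, and accordingly a_i (x) A_2 or A_1 (x) b_p
   is an ideal; both dimensions being > 1, it lies strictly between K u and A. *)

Section QuotientNotSimple.
Variables (K : fieldType) (A : lmodType K) (mulA : A -> A -> A) (P : A -> Prop).

Lemma quotient_not_simple_of_proper_ideal (J : A -> Prop) (y z : A) :
  alg_ideal mulA J -> (forall x, P x -> J x) -> J y -> ~ P y -> ~ J z ->
  ~ quotient_simple mulA P.
Proof.
move=> [[J0 JD] JM] PJ Jy nPy nJz
  [V [mulV [f [[_ [lin [hom [surj ker]]]] [_ simp]]]]].
pose F : {linear A -> V} := HB.pack f (GRing.isLinear.Build _ _ _ _ f lin).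
have imJ_ideal : alg_ideal mulV (fun v => exists2 x, J x & f x = v).
  split.
    split; first by exists 0 => //; exact: (linear0 F).
    move=> a _ _ [x1 J1 <-] [x2 J2 <-].
    by exists (a *: x1 + x2); [exact: JD | rewrite lin].
  move=> v _ [x Jx <-]; have [x' <-] := surj v; have [Jx'x Jxx'] := JM x' x Jx.
  by rewrite -!hom; split; [exists (mulA x' x) | exists (mulA x x')].
case: (simp _ imJ_ideal) => [imJ0 | imJ_full].
  by apply/nPy/ker/imJ0; exists y.
have [x Jx fx] := imJ_full (f z).
have fB : f (z - x) = f z - f x := linearB F z x.
have Pzx : P (z - x) by apply/ker; rewrite fB fx subrr.
have := JD 1 _ _ (PJ _ Pzx) Jx.
by rewrite scale1r subrK.
Qed.

(* The class of w spans an ideal of the quotient annihilating it. *)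
Lemma quotient_not_simple_of_annihilating (w : A) :
  ~ P w -> (forall x v, line w v -> P (mulA x v) /\ P (mulA v x)) ->
  ~ quotient_simple mulA P.
Proof.
move=> nPw ann [V [mulV [f [[_ [lin [hom [surj ker]]]] [[x [y nz]] simp]]]]].
pose F : {linear A -> V} := HB.pack f (GRing.isLinear.Build _ _ _ _ f lin).
have fZ k : f (k *: w) = k *: f w := linearZ_LR F k w.
have Pw_mul v k : P (mulA v (k *: w)) /\ P (mulA (k *: w) v).
  by apply: ann; exists k.
have fw_ideal : alg_ideal mulV (line (f w)).
  split.
    split; first by exists 0; rewrite scale0r.
    move=> a _ _ [k1 ->] [k2 ->]; exists (a * k1 + k2).
    by rewrite scalerDl scalerA.
  move=> v _ [k ->]; have [x' <-] := surj v.
  rewrite -fZ -!hom; have [/ker-> /ker->] := Pw_mul x' k.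
  by split; exists 0; rewrite scale0r.
case: (simp _ fw_ideal) => [fw0 | fw_full].
  by apply/nPw/ker/fw0; exists 1; rewrite scale1r.
move: nz; have [x' <-] := surj x; have [k ->] := fw_full y.
by rewrite -fZ -hom; apply; apply/ker; have [] := Pw_mul x' k.
Qed.

End QuotientNotSimple.

Section EvolutionAlgebra.
Variables (K : fieldType) (I : finType) (C : I -> I -> K).
Implicit Types (x y u : evo K I) (S : {set I}).

Lemma evo_mulC x y : evo_mul C x y = evo_mul C y x.
Proof.
by apply/ffunP => l; rewrite !ffunE; apply: eq_bigr => i _; rewrite (mulrC (x i)).
Qed.

Lemma evo_mulrZ x y k : evo_mul C x (k *: y) = k *: evo_mul C x y.
Proof.
apply/ffunP => l; rewrite !ffunE scaler_sumr; apply: eq_bigr => i _.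
rewrite ffunE; change (x i * (k * y i) * C i l = k * (x i * y i * C i l)).
by rewrite mulrCA -!mulrA.
Qed.

Lemma evo_mul_basis x j : evo_mul C x (evo_basis K j) = [ffun l => x j * C j l].
Proof.
apply/ffunP => l; rewrite !ffunE (bigD1 j) //= big1 ?addr0 => [|i ne].
  by rewrite ffunE eqxx mulr1.
by rewrite ffunE eq_sym (negbTE ne) mulr0 mul0r.
Qed.

Lemma evo_mul_basisr x j :
  evo_mul C x (evo_basis K j) = x j *: evo_mul C (evo_basis K j) (evo_basis K j).
Proof. by apply/ffunP => l; rewrite !evo_mul_basis !ffunE eqxx mul1r. Qed.

Lemma evo_basis_notin_line u i j :
  j != i -> u i != 0 -> ~ line u (evo_basis K j).
Proof.
move=> ji ui [c /ffunP ej]; move: (ej i) (ej j); rewrite !ffunE eqxx (negbTE ji).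
move=> /esym /eqP; rewrite mulf_eq0 (negbTE ui) orbF => /eqP -> /eqP.
by rewrite scale0r oner_eq0.
Qed.

Lemma evo_basis_sq_in_line u j :
  alg_ideal (evo_mul C) (line u) -> u j != 0 ->
  line u (evo_mul C (evo_basis K j) (evo_basis K j)).
Proof.
move=> [_ ideal] uj.
have [|c ejc] := (ideal (evo_basis K j) u _).2; first by exists 1; rewrite scale1r.
exists (c / u j); rewrite mulrC -scalerA -ejc (evo_mul_basisr u).
by rewrite scalerA mulVf // scale1r.
Qed.

Lemma evo_quotient_line_not_simple u :
  alg_ideal (evo_mul C) (line u) -> (1 < #|supp u|)%N ->
  ~ quotient_simple (evo_mul C) (line u).
Proof.
move=> ideal /card_gt1P [j [i [+ + ji]]]; rewrite !inE => uj ui.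
have [c ej2] := evo_basis_sq_in_line ideal uj.
apply: (quotient_not_simple_of_annihilating (w := evo_basis K j)).
  exact: evo_basis_notin_line ji ui.
move=> x _ [k ->].
have line_prod : line u (evo_mul C x (k *: evo_basis K j)).
  by exists (k * (x j * c)); rewrite evo_mulrZ evo_mul_basisr ej2 !scalerA mulrA.
by split; last rewrite evo_mulC.
Qed.

Lemma supp_eq0 u : (supp u == set0) = (u == 0).
Proof.
apply/eqP/eqP => [supp0 | ->]; last by apply/setP => l; rewrite !inE ffunE eqxx.
apply/ffunP => l; rewrite ffunE; apply/eqP; apply: contraT => ul.
by have := in_set0 l; rewrite -supp0 inE ul.
Qed.

Lemma supp_subsetP S x :
  reflect (forall l, l \notin S -> x l = 0) (supp x \subset S).
Proof.
apply: (iffP subsetP) => [sub l | zero l].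
  by apply: contraNeq => xl; apply: sub; rewrite inE.
by rewrite inE; apply: contraR => /zero ->.
Qed.

Definition sq_closed S : Prop := forall l m, l \in S -> m \notin S -> C l m = 0.

Lemma supp_subset_ideal S :
  sq_closed S -> alg_ideal (evo_mul C) (fun x => supp x \subset S).
Proof.
move=> closedS; split.
  split; first by apply/supp_subsetP => l _; rewrite ffunE.
  move=> a x y /supp_subsetP x0 /supp_subsetP y0; apply/supp_subsetP => l lS.
  by rewrite !ffunE x0 // y0 // scaler0 addr0.
have mul_supp x y : supp y \subset S -> supp (evo_mul C x y) \subset S.
  move=> /supp_subsetP y0; apply/supp_subsetP => l lS; rewrite ffunE big1 // => m _.
  case: (boolP (m \in S)) => mS; first by rewrite closedS // mulr0.
  by rewrite y0 // mulr0 mul0r.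
by move=> x y Sy; rewrite [evo_mul C y x]evo_mulC; split; apply: mul_supp.
Qed.

(* span{e_l | l in S} is an ideal strictly between K u and A. *)
Lemma evo_quotient_not_simple_of_sq_closed S u :
  sq_closed S -> supp u \proper S -> S \proper [set: I] ->
  ~ quotient_simple (evo_mul C) (line u).
Proof.
move=> closedS /properP [uS [a aS au]] /properP [_ [b _ bS]].
apply: (quotient_not_simple_of_proper_ideal (y := evo_basis K a) (z := evo_basis K b)
          (supp_subset_ideal closedS)).
- move=> _ [k ->]; apply: subset_trans uS; apply/subsetP => l.
  by rewrite !inE ffunE mulf_eq0 negb_or => /andP[].
- by apply/supp_subsetP => l lS; rewrite ffunE; case: eqP lS => // <-; rewrite aS.
- move=> [k /ffunP /(_ a)]; rewrite !ffunE eqxx.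
  by move: au; rewrite inE negbK => /eqP ->; rewrite scaler0 => /eqP; rewrite oner_eq0.
- by move/subsetP/(_ b); rewrite !inE ffunE eqxx oner_eq0 => /(_ isT); apply/negP.
Qed.

Lemma line_ideal_offdiag0 u l0 :
  alg_ideal (evo_mul C) (line u) -> supp u = [set l0] ->
  forall l, l != l0 -> C l0 l = 0.
Proof.
move=> ideal supp_u.
have u_supp l : (u l != 0) = (l == l0) by rewrite -in_set1 -supp_u inE.
have ul0 : u l0 != 0 by rewrite u_supp.
have [c /ffunP sq] := evo_basis_sq_in_line ideal ul0.
move=> l /negbTE l_l0; move: (sq l); rewrite evo_mul_basis !ffunE eqxx mul1r.
by have := u_supp l; rewrite l_l0 => /negbFE/eqP ->; rewrite scaler0.
Qed.

End EvolutionAlgebra.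

Lemma exists_neq (T : finType) (x : T) : (1 < #|T|)%N -> exists y : T, y != x.
Proof.
move=> /card_gt1P [a [b [_ _ ab]]].
by case: (eqVneq a x) => [<- | ax]; [exists b; rewrite eq_sym | exists a].
Qed.

Section TensorProduct.
Variables (K : fieldType) (I1 I2 : finType) (C1 : I1 -> I1 -> K) (C2 : I2 -> I2 -> K).
Local Notation C := (tensor_C C1 C2).

Lemma tensor_offdiag0 i p :
  (forall l, l != (i, p) -> C (i, p) l = 0) ->
  (forall k, k != i -> C1 i k = 0) \/ (forall r, r != p -> C2 p r = 0).
Proof.
move=> offdiag0.
case: (boolP [forall k, (k != i) ==> (C1 i k == 0)]) => [/forallP row0 | /forallPn [k]].
  by left => k ki; apply/eqP; have /implyP := row0 k; apply.
rewrite negb_imply => /andP [ki /negbTE Cik]; right => r rp; apply/eqP.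
have kr : (k, r) != (i, p) by apply: contraNneq ki => -[->].
have /eqP := offdiag0 _ kr.
by rewrite /tensor_C mulf_eq0 Cik.
Qed.

Lemma tensor_row_sq_closed i :
  (forall k, k != i -> C1 i k = 0) -> sq_closed C [set l | l.1 == i].
Proof.
move=> row0 [l1 l2] [m1 m2]; rewrite !inE /= => /eqP -> mi.
by rewrite /tensor_C row0 ?mul0r.
Qed.

Lemma tensor_col_sq_closed p :
  (forall r, r != p -> C2 p r = 0) -> sq_closed C [set l | l.2 == p].
Proof.
move=> col0 [l1 l2] [m1 m2]; rewrite !inE /= => /eqP -> mp.
by rewrite /tensor_C col0 ?mulr0.
Qed.

Lemma tensor_quotient_line_not_simple u :
  (1 < #|I1|)%N -> (1 < #|I2|)%N -> u <> 0 -> alg_ideal (evo_mul C) (line u) ->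
  ~ quotient_simple (evo_mul C) (line u).
Proof.
move=> I1_gt1 I2_gt1 u_neq0 ideal.
have [|supp_le1] := ltnP 1 #|supp u|; first exact: evo_quotient_line_not_simple.
have /cards1P [[i p] supp_u] : #|supp u| == 1%N.
  by rewrite eqn_leq supp_le1 card_gt0 supp_eq0; apply/eqP.
have [j ji] := exists_neq i I1_gt1; have [q qp] := exists_neq p I2_gt1.
have set1_proper (S : {set I1 * I2}) l :
    (i, p) \in S -> l \in S -> l != (i, p) -> [set (i, p)] \proper S.
  by move=> ipS lS lip; apply/properP; rewrite sub1set; split=> //; exists l; rewrite ?inE.
case: (tensor_offdiag0 (line_ideal_offdiag0 ideal supp_u)) => [row0 | col0].
- apply: (evo_quotient_not_simple_of_sq_closed (tensor_row_sq_closed row0)).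
    rewrite supp_u; apply: (set1_proper _ (i, q)); rewrite ?inE ?eqxx //.
    by apply: contraNneq qp => -[->].
  by rewrite properT; apply/eqP => /setP /(_ (j, p)); rewrite !inE (negbTE ji).
- apply: (evo_quotient_not_simple_of_sq_closed (tensor_col_sq_closed col0)).
    rewrite supp_u; apply: (set1_proper _ (j, p)); rewrite ?inE ?eqxx //.
    by apply: contraNneq ji => -[->].
  by rewrite properT; apply/eqP => /setP /(_ (i, q)); rewrite !inE (negbTE qp).
Qed.

End TensorProduct.

Theorem theorem4p7 (K : fieldType) :
  (* (i) *)
  (forall (n : nat) (C : 'I_n -> 'I_n -> K) (u : evo K 'I_n),
      alg_ideal (evo_mul C) (line u) ->
      (1 < #|supp u|)%N ->
      ~ quotient_simple (evo_mul C) (line u)) /\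
  (* (ii) *)
  (forall (n1 n2 : nat) (C1 : 'I_n1 -> 'I_n1 -> K) (C2 : 'I_n2 -> 'I_n2 -> K)
          (u : evo K ('I_n1 * 'I_n2)%type),
      (1 < n1)%N -> (1 < n2)%N ->
      u <> 0 ->
      alg_ideal (evo_mul (tensor_C C1 C2)) (line u) ->
      ~ quotient_simple (evo_mul (tensor_C C1 C2)) (line u)).
Proof.
split=> [n C u | n1 n2 C1 C2 u n1_gt1 n2_gt1]; first exact: evo_quotient_line_not_simple.
by apply: tensor_quotient_line_not_simple; rewrite card_ord.
Qed.
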